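(* Let $\mu_1\in(0,1)$ and $0<\varepsilon_2\le\frac12\mu_1$. Let $h(\mu_1,\varepsilon_2)=\ln\frac{(1-\mu_1+\varepsilon_2)\mu_1}{(1-\mu_1)(\mu_1-\varepsilon_2)}$ and $H=\frac{1}{(\mu_1-\varepsilon_2)(1-\mu_1+\varepsilon_2)h(\mu_1,\varepsilon_2)^2}$. Then \[ H\le\frac{2\dot\mu_1}{\varepsilon_2^2}+\frac{2}{\varepsilon_2},\qquad\text{where }\dot\mu_1=\mu_1(1-\mu_1). \] *)

From Stdlib Require Import Reals.
Open Scope R_scope.

Definition hfun (mu1 eps2 : R) : R :=
  ln (((1 - mu1 + eps2) * mu1) / ((1 - mu1) * (mu1 - eps2))).

Definition Hfun (mu1 eps2 : R) : R :=
  1 / ((mu1 - eps2) * (1 - mu1 + eps2) * (hfun mu1 eps2) ^ 2).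

Definition mudot (mu1 : R) : R := mu1 * (1 - mu1).

(* Write a := mu1 - eps2 and b := 1 - mu1 + eps2. The argument of the logarithm
   in h factors as (b / (1 - mu1)) (mu1 / a), and ln x >= 1 - 1/x turns each
   factor into a linear term: h >= eps2 / b + eps2 / mu1 >= eps2 / (mu1 b).
   Hence H <= mu1^2 b / (a eps2^2), and eps2 <= mu1 / 2 gives a >= mu1 / 2, so
   H <= 2 mu1 b / eps2^2 = 2 mu1 (1 - mu1) / eps2^2 + 2 mu1 / eps2. *)

From Stdlib Require Import Reals Lra.
Open Scope R_scope.

Lemma ln_ge_1_sub_inv (x : R) : 0 < x -> 1 - / x <= ln x.
Proof.
  intros Hx.
  pose proof (exp_ineq1_le (ln (/ x))) as H.
  rewrite exp_ln in H by (apply Rinv_0_lt_compat; lra).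
  rewrite ln_Rinv in H by lra.
  lra.
Qed.

Lemma hfun_ge (mu1 eps2 : R) :
  0 < eps2 < mu1 -> mu1 < 1 ->
  eps2 / mu1 + eps2 / (1 - mu1 + eps2) <= hfun mu1 eps2.
Proof.
  intros [E0 E1] H1.
  unfold hfun.
  replace ((1 - mu1 + eps2) * mu1 / ((1 - mu1) * (mu1 - eps2)))
    with (((1 - mu1 + eps2) / (1 - mu1)) * (mu1 / (mu1 - eps2)))
    by (field; lra).
  rewrite ln_mult by (apply Rdiv_lt_0_compat; lra).
  pose proof (ln_ge_1_sub_inv ((1 - mu1 + eps2) / (1 - mu1))
                ltac:(apply Rdiv_lt_0_compat; lra)) as Hb.
  pose proof (ln_ge_1_sub_inv (mu1 / (mu1 - eps2))
                ltac:(apply Rdiv_lt_0_compat; lra)) as Ha.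
  replace (1 - / ((1 - mu1 + eps2) / (1 - mu1))) with (eps2 / (1 - mu1 + eps2))
    in Hb by (field; lra).
  replace (1 - / (mu1 / (mu1 - eps2))) with (eps2 / mu1) in Ha by (field; lra).
  lra.
Qed.

Lemma Hfun_le (mu1 eps2 : R) :
  0 < eps2 < mu1 -> mu1 < 1 ->
  Hfun mu1 eps2 <= mu1 ^ 2 * (1 - mu1 + eps2) / ((mu1 - eps2) * eps2 ^ 2).
Proof.
  intros [E0 E1] H1.
  set (b := 1 - mu1 + eps2).
  assert (Hb : 0 < b) by (unfold b; lra).
  assert (Hpos : 0 < eps2 / (mu1 * b)) by (apply Rdiv_lt_0_compat; nra).
  assert (Hlow : eps2 / (mu1 * b) <= hfun mu1 eps2).
  { apply Rle_trans with (eps2 / mu1 + eps2 / b); [|apply hfun_ge; lra].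
    replace (eps2 / mu1 + eps2 / b) with (eps2 / (mu1 * b) * (1 + eps2))
      by (unfold b; field; lra).
    nra. }
  unfold Hfun; fold b.
  replace (mu1 ^ 2 * b / ((mu1 - eps2) * eps2 ^ 2))
    with (1 / ((mu1 - eps2) * b * (eps2 / (mu1 * b)) ^ 2)) by (field; lra).
  apply Rmult_le_compat_l; [lra|].
  apply Rinv_le_contravar.
  - apply Rmult_lt_0_compat; [apply Rmult_lt_0_compat; lra | apply pow_lt; lra].
  - apply Rmult_le_compat_l; [apply Rmult_le_pos; lra|].
    apply pow_incr; lra.
Qed.

Theorem lemma15 (mu1 eps2 : R) :
  0 < mu1 < 1 -> 0 < eps2 <= mu1 / 2 ->
  Hfun mu1 eps2 <= 2 * mudot mu1 / eps2 ^ 2 + 2 / eps2.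
Proof.
  intros [H0 H1] [E0 E1].
  apply Rle_trans with (mu1 ^ 2 * (1 - mu1 + eps2) / ((mu1 - eps2) * eps2 ^ 2));
    [apply Hfun_le; lra|].
  assert (Heps2 : 0 < eps2 ^ 2) by (apply pow_lt; lra).
  assert (Hhalf : mu1 ^ 2 / (mu1 - eps2) <= 2 * mu1).
  { apply Rmult_le_reg_r with (mu1 - eps2); [lra|].
    unfold Rdiv; rewrite Rmult_assoc, Rinv_l by lra.
    nra. }
  replace (2 * mudot mu1 / eps2 ^ 2 + 2 / eps2)
    with ((2 * mu1 * (1 - mu1 + eps2) + 2 * (1 - mu1) * eps2) / eps2 ^ 2)
    by (unfold mudot; field; lra).
  replace (mu1 ^ 2 * (1 - mu1 + eps2) / ((mu1 - eps2) * eps2 ^ 2))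
    with (mu1 ^ 2 / (mu1 - eps2) * (1 - mu1 + eps2) / eps2 ^ 2) by (field; lra).
  apply Rmult_le_compat_r; [apply Rlt_le, Rinv_0_lt_compat; lra|].
  assert (0 <= (1 - mu1) * eps2) by nra.
  nra.
Qed.
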